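(* Let $k\geq 4$ and let $G$ be a diregular $(2,k,+3)$-digraph. Let $u,v$ be distinct vertices with exactly one common out-neighbour $u_2$, and write $N^+(u)=\{u_1,u_2\}$, $N^+(v)=\{v_1,u_2\}$. Then $v_1\in O(u)$, $u_1\in O(v)$, and $|O(u)\cap N^+(v_1)|=|O(v)\cap N^+(u_1)|=1$.
   Context: A digraph is $k$-geodetic if for every ordered pair of vertices $x,y$ there is at most one directed path from $x$ to $y$ of length at most $k$ (the trivial path counts). A diregular $(2,k,+3)$-digraph is a $k$-geodetic digraph of order $1+2+\dots+2^k+3$ in which every vertex has in- and out-degree $2$. $N^+(x)$ is the set of out-neighbours of $x$. $d(x,y)$ is the directed distance; $O(x)=\{y: d(x,y)\geq k+1\}$ is the outlier set of $x$. *)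

From mathcomp Require Import all_boot.
Set Implicit Arguments. Unset Strict Implicit. Unset Printing Implicit Defensive.

Section Digraph.
Variables (V : finType) (e : rel V).

Definition Nout (x : V) : {set V} := [set y | e x y].
Definition Nin (x : V) : {set V} := [set y | e y x].

(* A directed walk from x of length size p is x :: p with path e x p;
   it ends at last x p. k-geodetic: at most one walk of length <= k
   between any ordered pair (the trivial walk [::] counts). *)
Definition k_geodetic (k : nat) : Prop :=
  forall (x : V) (p q : seq V),
    path e x p -> path e x q -> last x p = last x q ->
    size p <= k -> size q <= k -> p = q.

Definition dist_le (n : nat) (x y : V) : bool :=
  [exists m : 'I_n.+1, exists p : m.-tuple V, path e x p && (last x p == y)].

Definition outlier (k : nat) (x : V) : {set V} := [set y | ~~ dist_le k x y].

Definition diregular (d : nat) : Prop :=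
  forall x : V, #|Nout x| = d /\ #|Nin x| = d.

Definition digraph_2k3 (k : nat) : Prop :=
  [/\ k_geodetic k, diregular 2 & #|V| = (\sum_(i < k.+1) 2 ^ i) + 3].

End Digraph.

(** Write T(t) for the set of vertices at distance less than k from t. As the
digraph is k-geodetic, T(t) is a complete binary out-tree of depth k-1, so the
order of the digraph leaves exactly three outliers to every vertex, and whatever
is not an outlier of a vertex x with out-neighbours x1, x2 is x itself or lies in
T(x1) or T(x2).

The counting tool is an escape argument: if z lies in T(t) and in T(s) but
strictly deeper in T(s), then each of the 2^(k-1-d) leaves of T(t) below z
(d the depth of z in T(t)) lies below a descendant of z outside T(s).

If v1 were not an outlier of u, it would lie in T(u1), and its descendants
outside T(u1) would lie in {u} ∪ O(u); the escape count then forces both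
out-neighbours of v1 into O(u). Pushing outliers forward along edges, v1 and
its grandchildren other than u1 (at least four vertices) land in O(u2), which
has only three elements. For the second claim, both out-neighbours of v1 being outliers of u
is excluded in the same way; if neither is, both lie in T(u1), and according
to how many of them are out-neighbours of u1 a contradiction comes from the
first claim for the pair (u1, v1), from an escape count, or, when u1 and v1
have the same out-neighbours, from locating the outliers of the other
in-neighbours of u1 and v1. *)

From mathcomp Require Import all_boot zify.
Set Implicit Arguments. Unset Strict Implicit. Unset Printing Implicit Defensive.

Lemma leq_sum_subset (T : finType) (A B : {set T}) (F : T -> nat) :
  A \subset B -> \sum_(i in A) F i <= \sum_(i in B) F i.
Proof. by move=> /subsetP sAB; apply: (sub_le_big leqnn (fun m n => leq_addr n m)). Qed.

Lemma sum_setU_disjoint (T : finType) (A B : {set T}) (F : T -> nat) :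
  [disjoint A & B] -> \sum_(i in A :|: B) F i = \sum_(i in A) F i + \sum_(i in B) F i.
Proof. by move=> dAB; rewrite -bigU //; apply: eq_bigl => i; rewrite inE. Qed.

Lemma leq_sum_setU (T : finType) (A B : {set T}) (F : T -> nat) :
  \sum_(i in A :|: B) F i <= \sum_(i in A) F i + \sum_(i in B) F i.
Proof.
have -> : A :|: B = A :|: (B :\: A) by apply/setP => x; rewrite !inE; case: (x \in A).
rewrite sum_setU_disjoint ?leq_add2l ?leq_sum_subset ?subsetDl //.
by rewrite disjoint_sym disjoints_subset setDE subsetIr.
Qed.

Lemma leq_sum_set3 (T : finType) (F : T -> nat) a b c :
  \sum_(i in [set a; b; c]) F i <= F a + F b + F c.
Proof.
apply: leq_trans (leq_sum_setU _ _ _) _; rewrite big_set1 leq_add2r.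
by apply: leq_trans (leq_sum_setU _ _ _) _; rewrite !big_set1.
Qed.

Lemma cardsU_disjoint (T : finType) (A B : {set T}) :
  [disjoint A & B] -> #|A :|: B| = #|A| + #|B|.
Proof. by move=> dAB; apply/eqP; rewrite (leq_card_setU A B).2. Qed.

Lemma cards3 (T : finType) (a b c : T) :
  a != b -> a != c -> b != c -> #|[set a; b; c]| = 3.
Proof. by move=> ab ac bc; rewrite -setUA cardsU1 cards2 !inE negb_or ab ac bc. Qed.

Lemma cardsI2 (T : finType) (A : {set T}) a b :
  a \in A -> b \notin A -> #|A :&: [set a; b]| = 1.
Proof.
move=> aA bA; rewrite (_ : A :&: [set a; b] = [set a]) ?cards1 //.
apply/setP => x; rewrite !inE; case: (eqVneq x a) => [-> | _]; first by rewrite aA.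
by case: (eqVneq x b) => [-> | _]; rewrite ?(negbTE bA) ?andbF.
Qed.

Lemma card2_eq (T : finType) (A : {set T}) a b c :
  #|A| = 2 -> a \in A -> b \in A -> c \in A -> a != c -> b != c -> a = b.
Proof.
move=> /eqP/cards2P[x [y [_ ->]]]; rewrite !inE.
by do 3![case/orP=> /eqP->]; rewrite ?eqxx.
Qed.

Lemma card2_other (T : finType) (A : {set T}) y : #|A| = 2 -> exists2 z, z \in A & z != y.
Proof.
move=> A2; have /set0Pn[z] : A :\ y != set0.
  by rewrite -card_gt0; move: (cardsD1 y A) (leq_b1 (y \in A)); rewrite A2; lia.
by rewrite !inE => /andP[zy zA]; exists z.
Qed.

Lemma pow2_le_sum3 n i j : 2 < n -> 0 < i -> 0 < j ->
  2 ^ n <= 1 + 2 ^ (n - i) + 2 ^ (n - j) -> i = 1 /\ j = 1.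
Proof.
move=> n2 i0 j0; set p := 2 ^ (n - 2).
have p2 : 2 ^ 1 <= p by rewrite /p leq_exp2l //; lia.
have En : 2 ^ n = 4 * p by rewrite /p -{1}(subnK (ltnW n2)) expnD mulnC.
have bnd m : 0 < m -> 2 ^ (n - m) <= (if m == 1 then 2 * p else p).
  move=> m0; case: eqP => [-> | m1]; first by rewrite /p -expnS leq_exp2l //; lia.
  by rewrite leq_exp2l //; lia.
by move: (bnd i i0) (bnd j j0); case: eqP; case: eqP; lia.
Qed.

(** * Walks of a given length *)

Section Walks.
Variables (V : finType) (e : rel V).

Definition walkn (i : nat) (x y : V) : bool :=
  [exists p : i.-tuple V, path e x p && (last x p == y)].

Definition sphere (i : nat) (x : V) : {set V} := [set y | walkn i x y].
Definition ball (n : nat) (x : V) : {set V} := [set y | dist_le e n x y].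

Lemma walknP i x y :
  reflect (exists p, [/\ path e x p, last x p = y & size p = i]) (walkn i x y).
Proof.
apply: (iffP existsP) => [[p /andP[ep /eqP lp]] | [p [ep lp sp]]].
  by exists p; rewrite size_tuple.
have sp' : size p == i by rewrite sp.
by exists (Tuple sp'); rewrite /= ep lp eqxx.
Qed.

Lemma walkn0 x y : walkn 0 x y = (x == y).
Proof.
apply/walknP/eqP => [[p [_ <- /size0nil ->]] // | ->].
by exists [::].
Qed.

Lemma walknS i x y : walkn i.+1 x y = [exists z, e x z && walkn i z y].
Proof.
apply/walknP/existsP => [[[|z p] [//= /andP[xz ep] lp [sp]]] | [z /andP[xz /walknP[p [ep lp sp]]]]].
  by exists z; rewrite xz; apply/walknP; exists p.
by exists (z :: p); rewrite /= xz ep lp sp.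
Qed.

Lemma walkn_cons i x z y : e x z -> walkn i z y -> walkn i.+1 x y.
Proof. by move=> xz zy; rewrite walknS; apply/existsP; exists z; rewrite xz. Qed.

Lemma walkn1 x y : walkn 1 x y = e x y.
Proof.
rewrite walknS; apply/existsP/idP => [[z /andP[xz]] | xy].
  by rewrite walkn0 => /eqP <-.
by exists y; rewrite xy walkn0 eqxx.
Qed.

Lemma walkn_cat i j x z y : walkn i x z -> walkn j z y -> walkn (i + j) x y.
Proof.
move=> /walknP[p [xp lp sp]] /walknP[q [zq lq sq]]; apply/walknP.
by exists (p ++ q); rewrite cat_path last_cat size_cat lp xp zq lq sp sq.
Qed.

Lemma walkn_rcons i x z y : walkn i x z -> e z y -> walkn i.+1 x y.
Proof. by move=> xz zy; rewrite -addn1; apply: walkn_cat xz _; rewrite walkn1. Qed.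

Lemma walknSr i x y : walkn i.+1 x y -> exists2 z, walkn i x z & e z y.
Proof.
case/walknP=> p [+ + sp]; case/lastP: p sp => [//|p z].
rewrite size_rcons rcons_path last_rcons => -[sp] /andP[ep ez] <-.
by exists (last x p) => //; apply/walknP; exists p.
Qed.

Lemma dist_leP n x y : reflect (exists2 i, i <= n & walkn i x y) (dist_le e n x y).
Proof.
apply: (iffP existsP) => [[i /existsP[p ep]] | [i ni /existsP[p ep]]].
  by exists i; [rewrite -ltnS | apply/existsP; exists p].
by exists (Ordinal (ni : i < n.+1)); apply/existsP; exists p.
Qed.

Lemma dist_leS n x y :
  dist_le e n.+1 x y = (x == y) || [exists z, e x z && dist_le e n z y].
Proof.
apply/dist_leP/orP => [[[|i] ni] | [/eqP <- | /existsP[z /andP[xz /dist_leP[i ni zy]]]]].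
- by rewrite walkn0; left.
- rewrite walknS => /existsP[z /andP[xz zy]]; right.
  by apply/existsP; exists z; rewrite xz; apply/dist_leP; exists i.
- by exists 0; rewrite ?walkn0.
- by exists i.+1; last exact: walkn_cons xz zy.
Qed.

Lemma ball0 x : ball 0 x = [set x].
Proof.
apply/setP => y; rewrite !inE; apply/dist_leP/eqP => [[[|//] _] | ->].
  by rewrite walkn0 eq_sym => /eqP.
by exists 0; rewrite ?walkn0.
Qed.

Lemma ballS n x : ball n.+1 x = ball n x :|: sphere n.+1 x.
Proof.
apply/setP => y; rewrite !inE.
apply/dist_leP/orP => [[i] | [/dist_leP[i ni xy] | xy]].
- by rewrite leq_eqVlt => /orP[/eqP-> | ni] xy; [right | left; apply/dist_leP; exists i].
- by exists i => //; apply: leqW.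
- by exists n.+1.
Qed.

End Walks.

Section Outliers.
Variables (V : finType) (e : rel V) (k : nat).
Hypotheses (geo : k_geodetic e k) (reg : diregular e 2).
Hypotheses (order : #|V| = \sum_(i < k.+1) 2 ^ i + 3) (k_ge4 : 4 <= k).

Local Notation O := (outlier e k).

Let k_gt0 : 0 < k. Proof. exact: leq_trans k_ge4. Qed.

Lemma walkn_uniq i j x y :
  walkn e i x y -> walkn e j x y -> i <= k -> j <= k -> i = j.
Proof.
move=> /walknP[p [xp lp <-]] /walknP[q [xq lq <-]] pk qk.
by rewrite (geo xp xq) // lp lq.
Qed.

Lemma walkn_cycle i x : 0 < i <= k -> walkn e i x x = false.
Proof.
case/andP=> i0 ik; have x0 : walkn e 0 x x by rewrite walkn0.
apply/negbTE/negP => /walkn_uniq/(_ x0 ik (leq0n k)) i_eq0.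
by rewrite i_eq0 in i0.
Qed.

Lemma walkn_edge i x y : e x y -> 0 < i <= k -> walkn e i x y = (i == 1).
Proof.
move=> xy /andP[i0 ik]; apply/idP/eqP => [xy' | ->]; last by rewrite walkn1.
by apply: walkn_uniq xy' _ ik (leq_trans i0 ik); rewrite walkn1.
Qed.

Lemma loopF x : e x x = false.
Proof. by rewrite -walkn1 walkn_cycle //; lia. Qed.

Lemma walkn_fork i j x x1 x2 y : e x x1 -> e x x2 ->
  walkn e i x1 y -> walkn e j x2 y -> i < k -> j < k -> x1 = x2.
Proof.
move=> xx1 xx2 /walknP[p [x1p lp sp]] /walknP[q [x2q lq sq]] ik jk.
suff [] : x1 :: p = x2 :: q by [].
by apply: (geo (x := x)); rewrite /= ?xx1 ?xx2 ?x1p ?x2q ?lp ?lq ?sp ?sq.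
Qed.

Lemma walkn_split i j x z1 z2 y : walkn e i x z1 -> walkn e j z1 y ->
  walkn e i x z2 -> walkn e j z2 y -> i + j <= k -> z1 = z2.
Proof.
move=> /walknP[p1 [xp1 <- sp1]] /walknP[q1 [zq1 lq1 sq1]].
move=> /walknP[p2 [xp2 <- sp2]] /walknP[q2 [zq2 lq2 sq2]] ijk.
have : p1 ++ q1 = p2 ++ q2.
  by apply: (geo (x := x));
    rewrite ?cat_path ?last_cat ?size_cat ?xp1 ?xp2 ?zq1 ?zq2 ?lq1 ?lq2 ?sp1 ?sq1 ?sp2 ?sq2.
by move/(congr1 (take i)); rewrite -{1}sp1 -sp2 !take_size_cat // => ->.
Qed.

Lemma out_deg2_eq x a b c : e x a -> e x b -> e x c -> a != c -> b != c -> a = b.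
Proof. by case: (reg x) => out2 _ xa xb xc; apply: (card2_eq out2); rewrite inE. Qed.

Lemma in_deg2_eq x a b c : e a x -> e b x -> e c x -> a != c -> b != c -> a = b.
Proof. by case: (reg x) => _ in2 ax bx cx; apply: (card2_eq in2); rewrite inE. Qed.

Lemma out_other x y : exists2 z, e x z & z != y.
Proof. by case: (reg x) => /(card2_other y)[z]; rewrite inE; exists z. Qed.

Lemma in_other x y : exists2 z, e z x & z != y.
Proof. by case: (reg x) => _ /(card2_other y)[z]; rewrite inE; exists z. Qed.

Lemma Nout_pair x a b : e x a -> e x b -> a != b -> Nout e x = [set a; b].
Proof.
case: (reg x) => out2 _ xa xb ab; apply/esym/eqP.
by rewrite eqEcard cards2 ab out2 subUset !sub1set !inE xa xb.
Qed.

(** * Moore counting *)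

Lemma card_sphere j x : j <= k -> #|sphere e j x| = 2 ^ j.
Proof.
elim: j x => [|j IH] x jk.
  have -> : sphere e 0 x = [set x] by apply/setP => y; rewrite !inE walkn0 eq_sym.
  by rewrite cards1.
have [x1 xx1 _] := out_other x x; have [x2 xx2 x21] := out_other x x1.
have -> : sphere e j.+1 x = sphere e j x1 :|: sphere e j x2.
  apply/setP => y; rewrite !inE walknS.
  apply/existsP/orP => [[z /andP[xz zy]] | [x1y | x2y]].
  - case: (eqVneq z x2) => [<- | zx2]; first by right.
    by left; rewrite -(out_deg2_eq xz xx1 xx2 zx2) // eq_sym.
  - by exists x1; rewrite xx1.
  - by exists x2; rewrite xx2.
rewrite cardsU_disjoint ?IH ?expnS ?mul2n ?addnn ?(ltnW jk) //.
rewrite -setI_eq0 -subset0; apply/subsetP => y; rewrite !inE => /andP[x1y x2y].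
by move: x21; rewrite (walkn_fork xx2 xx1 x2y x1y jk jk) eqxx.
Qed.

Lemma card_ball j x : j <= k -> #|ball e j x| = \sum_(i < j.+1) 2 ^ i.
Proof.
elim: j => [|j IH] jk; first by rewrite ball0 cards1 big_ord1.
rewrite ballS big_ord_recr /= -(card_sphere x) // -IH ?(ltnW jk) // cardsU_disjoint //.
rewrite -setI_eq0 -subset0; apply/subsetP => y; rewrite !inE => /andP[/dist_leP[i ij xy] xy'].
by have := walkn_uniq xy xy' (leq_trans ij (ltnW jk)) jk => ij'; rewrite ij' ltnn in ij.
Qed.

Lemma card_outlier x : #|O x| = 3.
Proof.
have -> : O x = ~: ball e k x by apply/setP => y; rewrite !inE.
by move: (cardsC (ball e k x)); rewrite card_ball // cardT -cardE order => /addnI.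
Qed.

Lemma outlier_split s x : x \in O s ->
  exists a b, [/\ a != x, b != x, a != b & O s = [set x; a; b]].
Proof.
move=> xO; have /cards2P[a [b [ab Oab]]] : #|O s :\ x| == 2.
  by move: (cardsD1 x (O s)); rewrite card_outlier xO; lia.
have : [set a; b] \subset O s :\ x by rewrite Oab.
rewrite subUset !sub1set !in_setD1 => /andP[/andP[ax _] /andP[bx _]].
by exists a, b; rewrite -setUA -Oab setD1K.
Qed.

Lemma outlier_third s x y : x \in O s -> y \in O s -> x != y ->
  exists a, [/\ a != x, a != y & O s = [set x; y; a]].
Proof.
move=> xO yO xy; have /cards1P[a Oa] : #|O s :\ x :\ y| == 1.
  move: (cardsD1 x (O s)) (cardsD1 y (O s :\ x)).
  by rewrite card_outlier xO in_setD1 eq_sym xy yO; lia.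
have := set11 a; rewrite -Oa !in_setD1 => /and3P[ay ax aO].
exists a; split; rewrite // -setUA -Oa setD1K ?setD1K //.
by rewrite in_setD1 eq_sym xy.
Qed.

Lemma outlier_eq3 s x y z : x \in O s -> y \in O s -> z \in O s ->
  x != y -> x != z -> y != z -> O s = [set x; y; z].
Proof.
move=> xO yO zO xy xz yz; apply/esym/eqP.
by rewrite eqEcard card_outlier cards3 // !subUset !sub1set xO yO zO.
Qed.

(** * Out-trees and escaping descendants *)

Definition tree (t : V) : {set V} := ball e k.-1 t.

(* The distance from [t] to [y] when it is less than [k], and [k] otherwise. *)
Definition depth (t y : V) : nat := find (fun i => walkn e i t y) (iota 0 k).

Lemma depth_walkn t y : depth t y < k -> walkn e (depth t y) t y.
Proof.
move=> dk; have has_walk : has (fun i => walkn e i t y) (iota 0 k).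
  by rewrite has_find size_iota.
by have := nth_find 0 has_walk; rewrite nth_iota.
Qed.

Lemma depthE i t y : walkn e i t y -> i < k -> depth t y = i.
Proof.
move=> ty ik; have has_walk : has (fun i => walkn e i t y) (iota 0 k).
  by apply/hasP; exists i; rewrite ?mem_iota.
have dk : depth t y < k by rewrite -[k in _ < k](size_iota 0) -has_find.
exact: (walkn_uniq (depth_walkn dk) ty (ltnW dk) (ltnW ik)).
Qed.

Lemma walkn_tree i t y : walkn e i t y -> i < k -> y \in tree t.
Proof. by move=> ty ik; rewrite inE; apply/dist_leP; exists i => //; lia. Qed.

Lemma mem_tree t y : (y \in tree t) = (depth t y < k).
Proof.
apply/idP/idP => [| /[dup] /depth_walkn]; last exact: walkn_tree.
by rewrite inE => /dist_leP[i ik ty]; rewrite (depthE ty); lia.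
Qed.

Lemma depth_eq0 t y : (depth t y == 0) = (y == t).
Proof.
apply/eqP/eqP => [d0 | ->]; last by apply: depthE; rewrite ?walkn0.
by have := @depth_walkn t y; rewrite d0 walkn0 eq_sym => /(_ k_gt0)/eqP.
Qed.

Lemma depth_eq1 t y : (depth t y == 1) = e t y.
Proof.
apply/eqP/idP => [d1 | ty]; last by apply: depthE; rewrite ?walkn1 //; lia.
by have := @depth_walkn t y; rewrite d1 walkn1; apply; lia.
Qed.

Lemma depth0 t : depth t t = 0.
Proof. by apply/eqP; rewrite depth_eq0. Qed.

Lemma tree_root t : t \in tree t.
Proof. by rewrite mem_tree depth0. Qed.

Lemma tree_edge t z y : depth t z < k.-1 -> e z y -> y \in tree t.
Proof. by move=> dz zy; apply: walkn_tree (walkn_rcons (depth_walkn _) zy) _; lia. Qed.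

Lemma depth_edge t z y : z \in tree t -> y \in tree t -> e z y ->
  depth t y = (depth t z).+1.
Proof.
rewrite !mem_tree => dz dy zy.
by apply: (walkn_uniq (depth_walkn dy) (walkn_rcons (depth_walkn dz) zy)); lia.
Qed.

Lemma tree_fork x x1 x2 y : e x x1 -> e x x2 -> y \in tree x1 -> y \in tree x2 -> x1 = x2.
Proof.
rewrite !mem_tree => xx1 xx2 d1 d2.
exact: (walkn_fork xx1 xx2 (depth_walkn d1) (depth_walkn d2) d1 d2).
Qed.

Lemma tree_edge_rootF x y : y \in tree x -> e y x = false.
Proof.
rewrite mem_tree => dy; apply/negbTE/negP => yx.
by move: (walkn_rcons (depth_walkn dy) yx); rewrite walkn_cycle //; lia.
Qed.

Lemma tree_twin s t y : (forall x, e s x -> e t x) -> y \in tree s -> y != s -> y \in tree t.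
Proof.
rewrite mem_tree -depth_eq0 => st dy; move: (depth_walkn dy).
case: (depth s y) dy => [//|d] dy; rewrite walknS => /existsP[z /andP[sz zy]] _.
exact: walkn_tree (walkn_cons (st z sz) zy) dy.
Qed.

Lemma depth_sibling_pred x y1 y2 w : e x y1 -> e x y2 -> e w y2 -> k.-1 <= depth y1 w.
Proof.
move=> xy1 xy2 wy2; rewrite leqNgt; apply/negP => dw.
have := walkn_cons xy1 (walkn_rcons (depth_walkn (_ : depth y1 w < k)) wy2).
by rewrite (walkn_edge xy2) //; lia.
Qed.

Lemma root_outlierF x : (x \in O x) = false.
Proof. by rewrite inE negbK; apply/dist_leP; exists 0; rewrite ?walkn0. Qed.

Lemma tree_outlierF x x1 y : e x x1 -> y \in tree x1 -> (y \in O x) = false.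
Proof.
rewrite mem_tree inE negbK => xx1 dy; apply/dist_leP.
by exists (depth x1 y).+1; [lia | exact: walkn_cons xx1 (depth_walkn dy)].
Qed.

Lemma outlier_treeF t y : y \in tree t -> (y \in O t) = false.
Proof.
rewrite mem_tree inE negbK => dy; apply/dist_leP.
by exists (depth t y); [lia | exact: depth_walkn].
Qed.

Lemma notin_outlier x x1 x2 y : e x x1 -> e x x2 -> x1 != x2 ->
  (y \notin O x) = [|| y == x, y \in tree x1 | y \in tree x2].
Proof.
move=> xx1 xx2 x12; rewrite inE negbK -[k in dist_le _ k](prednK k_gt0) dist_leS eq_sym.
congr (_ || _); apply/existsP/orP => [[z /andP[xz zy]] | [yt | yt]].
- case: (eqVneq z x2) => [<- | zx2]; [right | left]; rewrite inE //.
  by rewrite -(out_deg2_eq xz xx1 xx2 zx2 x12).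
- by exists x1; move: yt; rewrite xx1 inE.
- by exists x2; move: yt; rewrite xx2 inE.
Qed.

Lemma notin_outlier_pred s y : y \notin O s -> y != s -> exists2 r, r \in tree s & e r y.
Proof.
rewrite inE negbK => /dist_leP[[|i] ik]; first by rewrite walkn0 eq_sym => /eqP->; rewrite eqxx.
by case/walknSr=> r sr ry _; exists r => //; apply: walkn_tree sr _.
Qed.

Lemma outlier_succ s s1 s2 w y : e s s1 -> e s s2 -> s1 != s2 ->
  w \in O s -> e w y -> y != s1 -> y != s2 -> (y \in O s1) || (y \in O s2).
Proof.
move=> ss1 ss2 s12 ws wy ys1 ys2; apply/contraT; rewrite negb_or.
case/andP=> /notin_outlier_pred/(_ ys1)[r1 r1t r1y] /notin_outlier_pred/(_ ys2)[r2 r2t r2y].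
have r_w r si : e s si -> r \in tree si -> r != w.
  by move=> ssi rt; apply: contraTneq ws => <-; rewrite (tree_outlierF ssi rt).
have r12 := in_deg2_eq r1y r2y wy (r_w _ _ ss1 r1t) (r_w _ _ ss2 r2t).
by move: s12; rewrite (tree_fork ss1 ss2 r1t) ?r12 ?eqxx.
Qed.

Definition desc (t z : V) : {set V} :=
  [set y in tree t | (depth t z <= depth t y) && walkn e (depth t y - depth t z) z y].

Lemma mem_desc t z y : (y \in desc t z) =
  [&& y \in tree t, depth t z <= depth t y & walkn e (depth t y - depth t z) z y].
Proof. by rewrite in_set andbA. Qed.

(* The number of leaves of [tree t] below [y], for [y \in tree t]. *)
Definition weight (t y : V) : nat := 2 ^ (k.-1 - depth t y).

Lemma weight_eq1 t y : k.-1 <= depth t y -> weight t y = 1.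
Proof. by rewrite /weight -subn_eq0 => /eqP->. Qed.

Lemma desc_disjoint t z1 z2 : z1 \in tree t -> z2 \in tree t ->
  depth t z1 = depth t z2 -> z1 != z2 -> [disjoint desc t z1 & desc t z2].
Proof.
rewrite !mem_tree => d1 d2 d12 z12; rewrite -setI_eq0 -subset0.
apply/subsetP => y; rewrite in_setI !mem_desc mem_tree -d12.
case/andP=> /and3P[dy dz1 z1y] /and3P[_ _ z2y].
move: z12; rewrite (walkn_split (depth_walkn d1) z1y (_ : walkn e _ t z2) z2y) ?eqxx //.
  by rewrite d12; apply: depth_walkn.
lia.
Qed.

Lemma desc_edge t z c : c \in tree t -> depth t c = (depth t z).+1 -> e z c ->
  desc t c \subset desc t z :\ z.
Proof.
move=> ct dc zc; apply/subsetP => y; rewrite in_setD1 !mem_desc dc => /and3P[yt dcy cy].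
have dzy : depth t y - depth t z = (depth t y - (depth t z).+1).+1 by lia.
rewrite yt dzy (walkn_cons zc cy) (ltnW dcy) !andbT.
by apply: contraTneq dcy => ->; rewrite ltnn.
Qed.

Lemma escape_weight_root s t z : z \in tree t -> z \notin tree s ->
  weight t z <= \sum_(y in desc t z :\: tree s) weight t y.
Proof.
move=> zt zs; rewrite (bigD1 z) ?leq_addr //.
by rewrite in_setD mem_desc zs zt leqnn subnn walkn0 eqxx.
Qed.

(* While a descendant of [z] stays in [tree s] it keeps lagging behind, so every
   leaf below [z] lies below a descendant that leaves [tree s]. *)
Lemma escape_weight s t z : z \in tree t -> (z \in tree s -> depth t z < depth s z) ->
  weight t z <= \sum_(y in desc t z :\: tree s) weight t y.
Proof.
rewrite /weight; move Eh: (k.-1 - depth t z) => h.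
elim: h z Eh => [|h IH] z Eh zt lag; case/boolP: (z \in tree s) => zs;
  try by apply: leq_trans (escape_weight_root zt zs); rewrite /weight Eh.
  by move: (lag zs); rewrite mem_tree in zs; lia.
have dz : depth t z < k.-1 by lia.
have child c : e z c -> [/\ c \in tree t, depth t c = (depth t z).+1 &
    2 ^ h <= \sum_(y in desc t c :\: tree s) weight t y].
  move=> zc; have ct := tree_edge dz zc; have dc := depth_edge zt ct zc.
  split=> //; apply: IH => [|//|cs]; first lia.
  by rewrite dc (depth_edge zs cs zc) ltnS lag.
have [c1 zc1 _] := out_other z z; have [c2 zc2 c21] := out_other z c1.
have [c1t dc1 w1] := child c1 zc1; have [c2t dc2 w2] := child c2 zc2.
have c12 : c1 != c2 by rewrite eq_sym.
rewrite expnS mul2n -addnn; apply: leq_trans (leq_add w1 w2) _; rewrite -sum_setU_disjoint.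
  apply: leq_sum_subset; rewrite -setDUl setSD // subUset.
  by rewrite !(subset_trans (desc_edge _ _ _) (subsetDl _ _)).
apply: disjointWl (subsetDl _ _) (disjointWr (subsetDl _ _) _).
by apply: desc_disjoint; rewrite ?dc1 ?dc2.
Qed.

(** * Vertices with exactly one common out-neighbour *)

Definition one_common_out (u v u1 u2 v1 : V) : Prop :=
  [/\ e u u1 && e u u2, e v v1 && e v u2, u1 != u2, v1 != u2 & u1 != v1].

Lemma one_common_out_sym u v u1 u2 v1 :
  one_common_out u v u1 u2 v1 -> one_common_out v u v1 u2 u1.
Proof. by case=> ? ? ? ? ?; split; rewrite // eq_sym. Qed.

(* [lia] is exponential in the number of boolean hypotheses in context, while
   the arithmetic side conditions below only involve [k]. *)
Local Ltac lia_k := clear -k_ge4; lia.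

Section OneCommonOut.
Variables u v u1 u2 v1 : V.
Hypothesis F : one_common_out u v u1 u2 v1.

Let uu1 : e u u1. Proof. by case: F => /andP[]. Qed.
Let uu2 : e u u2. Proof. by case: F => /andP[]. Qed.
Let vv1 : e v v1. Proof. by case: F => _ /andP[]. Qed.
Let vv2 : e v u2. Proof. by case: F => _ /andP[]. Qed.
Let u12 : u1 != u2. Proof. by case: F. Qed.
Let v12 : v1 != u2. Proof. by case: F. Qed.
Let u1v1 : u1 != v1. Proof. by case: F. Qed.

Lemma one_common_out_neq : u != v.
Proof. by apply: contra_neq u1v1 => uv; apply: (out_deg2_eq _ vv1 vv2 u12 v12); rewrite -uv. Qed.

Lemma one_common_out_treeF y : y \in tree v1 -> (y \in tree u2) = false.
Proof. by move=> yt; apply/negP => /(tree_fork vv1 vv2 yt)/eqP; rewrite (negbTE v12). Qed.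

Lemma one_common_out_tree_sub : tree v1 :\: tree u1 \subset u |: O u.
Proof.
apply/subsetP => y; rewrite in_setD in_setU1 => /andP[yu1 yv1].
case/boolP: (y \in O u) => yO; rewrite ?orbT //.
by move: yO; rewrite (notin_outlier _ uu1 uu2 u12) (negbTE yu1) one_common_out_treeF ?orbF.
Qed.

Lemma one_common_out_root_outlier : v1 \in tree u1 -> v \in O u.
Proof.
move=> v1t; apply/contraT; rewrite (notin_outlier _ uu1 uu2 u12) => /or3P[/eqP vu | vt | vt].
- by move: one_common_out_neq; rewrite vu eqxx.
- have := depth_sibling_pred uu1 uu2 vv2; have := depth_edge vt v1t vv1.
  by move: v1t; rewrite mem_tree; lia_k.
- by move: vv2; rewrite (tree_edge_rootF vt).
Qed.

Lemma sphere2_outlier x : O u = x |: Nout e v1 -> ~~ walkn e 2 v1 x ->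
  sphere e 2 v1 :\ u1 \subset O u2.
Proof.
move=> Ou v1x; apply/subsetP => g /setD1P[gu1]; rewrite [g \in _]inE => v1g.
have [c v1c cg] : exists2 c, e v1 c & e c g.
  by move: v1g; rewrite walknS => /existsP[c /andP[v1c]]; rewrite walkn1; exists c.
have cO : c \in O u by rewrite Ou !inE v1c orbT.
have gu2 : g != u2.
  by apply: contraTneq (walkn_cons vv1 v1g) => ->; rewrite (walkn_edge vv2) //; lia_k.
case/orP: (outlier_succ uu1 uu2 u12 cO cg gu1 gu2) => // gO1.
have : g \notin O u.
  rewrite Ou !inE negb_or; apply/andP; split; first by apply: contraNneq v1x => <-.
  by apply: contraTN v1g => v1g; rewrite (walkn_edge v1g) //; lia_k.
rewrite (notin_outlier _ uu1 uu2 u12) => /or3P[/eqP gu | gt | gt].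
- move: v1g; rewrite gu => /walkn_rcons/(_ uu2)/(walkn_cons vv1).
  by rewrite (walkn_edge vv2) //; lia_k.
- by rewrite outlier_treeF in gO1.
- have v1t : g \in tree v1 by apply: walkn_tree v1g _; lia_k.
  by rewrite one_common_out_treeF in gt.
Qed.

Lemma out_nbrs_of_escape a b : v1 \in tree u1 -> O u = [set v; a; b] -> e v1 a && e v1 b.
Proof.
move=> v1t Ou; have v1O := tree_outlierF uu1 v1t.
have [av1 bv1] : a != v1 /\ b != v1.
  by split; apply: contraFneq v1O => <-; rewrite Ou !inE eqxx ?orbT.
have esc : desc v1 v1 :\: tree u1 \subset [set u; a; b].
  apply/subsetP => y; rewrite in_setD mem_desc => /andP[yu1 /and3P[yv1 _ _]].
  have := subsetP one_common_out_tree_sub y; rewrite in_setD yu1 yv1 => /(_ isT).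
  rewrite in_setU1 Ou !inE -orbA => /or4P[-> | /eqP yv | -> | ->]; rewrite ?orbT //.
  by move: vv1; rewrite -yv tree_edge_rootF.
have lag : v1 \in tree u1 -> depth v1 v1 < depth u1 v1.
  by rewrite depth0 lt0n depth_eq0 eq_sym u1v1.
have := leq_trans (escape_weight (tree_root v1) lag) (leq_sum_subset _ esc).
move/leq_trans/(_ (leq_sum_set3 _ _ _ _)).
rewrite (weight_eq1 (depth_sibling_pred vv1 vv2 uu2)) /weight depth0 subn0.
case/pow2_le_sum3; rewrite ?lt0n ?depth_eq0 //; first lia_k.
by move=> /eqP da /eqP db; rewrite -!depth_eq1 da db.
Qed.

Lemma one_common_out_outlier : v1 \in O u.
Proof.
apply/contraT => v1O; have v1t : v1 \in tree u1.
  move: v1O; rewrite (notin_outlier _ uu1 uu2 u12) => /or3P[/eqP v1u | // | v1t].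
    by move: (depth_sibling_pred vv1 vv2 uu2); rewrite -v1u depth0; lia_k.
  by rewrite one_common_out_treeF ?tree_root in v1t.
have [a [b [_ _ ab Ou]]] := outlier_split (one_common_out_root_outlier v1t).
have /andP[v1a v1b] := out_nbrs_of_escape v1t Ou.
have v1O2 : v1 \in O u2.
  have := outlier_succ uu1 uu2 u12 (one_common_out_root_outlier v1t) vv1.
  by rewrite eq_sym u1v1 v12 outlier_treeF //; apply.
have v1v : walkn e 2 v1 v = false.
  by apply: contraFF (walkn_cons vv1) _; rewrite walkn_cycle //; lia_k.
have Ou' : O u = v |: Nout e v1 by rewrite Ou (Nout_pair v1a v1b ab) setUA.
have sub := sphere2_outlier Ou' (negbT v1v).
have sub' : v1 |: (sphere e 2 v1 :\ u1) \subset O u2 by rewrite subUset sub1set v1O2 sub.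
move: (subset_leq_card sub') (cardsD1 u1 (sphere e 2 v1)) (leq_b1 (u1 \in sphere e 2 v1)).
by rewrite card_outlier cardsU1 in_setD1 inE walkn_cycle ?andbF ?card_sphere //=; lia_k.
Qed.

End OneCommonOut.

Section Twin.
Variables u v u1 u2 v1 : V.
Hypotheses (F : one_common_out u v u1 u2 v1) (twin : forall x, e u1 x = e v1 x).

Let uu1 : e u u1. Proof. by case: F => /andP[]. Qed.
Let uu2 : e u u2. Proof. by case: F => /andP[]. Qed.
Let vv1 : e v v1. Proof. by case: F => _ /andP[]. Qed.
Let vv2 : e v u2. Proof. by case: F => _ /andP[]. Qed.
Let u12 : u1 != u2. Proof. by case: F. Qed.
Let v12 : v1 != u2. Proof. by case: F. Qed.
Let u1v1 : u1 != v1. Proof. by case: F. Qed.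
Let u1_v1 x : e u1 x -> e v1 x. Proof. by rewrite twin. Qed.
Let v1_u1 x : e v1 x -> e u1 x. Proof. by rewrite twin. Qed.

Let vu1 : v != u1.
Proof. by apply: contraFneq (loopF v1) => vu1; rewrite -twin -vu1. Qed.

Lemma twin_root_outlier : v \in O u.
Proof.
apply/contraT; rewrite (notin_outlier _ uu1 uu2 u12) => /or3P[/eqP vu | vt | vt].
- by move: (one_common_out_neq F); rewrite vu eqxx.
- by move: vv1; rewrite (tree_edge_rootF (tree_twin u1_v1 vt vu1)).
- by move: vv2; rewrite (tree_edge_rootF vt).
Qed.

Lemma twin_third_outlier a : a \in O u -> a != v -> a != v1 -> a \in O v.
Proof.
move=> aO av av1; apply/contraT; rewrite (notin_outlier _ vv1 vv2 v12).
case/or3P=> [/eqP av' | avt | avt]; first by rewrite av' eqxx in av.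
- by rewrite (tree_outlierF uu1 (tree_twin v1_u1 avt av1)) in aO.
- by rewrite (tree_outlierF uu2 avt) in aO.
Qed.

Lemma twin_in_nbr w a : e w u1 -> w != u -> a \in O u -> a != v -> a != v1 -> e w a.
Proof.
move=> wu1 wu aO av av1.
have vv1' : v != v1 by apply: contraFneq (loopF v) => vv1'; rewrite {2}vv1'.
have Ou : O u = [set v; v1; a].
  by apply: outlier_eq3 twin_root_outlier (one_common_out_outlier F) aO vv1' _ _; rewrite eq_sym.
have [s ws su1] := out_other w u1.
have u2s : u2 != s.
  apply/eqP => u2s; have wv : w = v.
    by apply: (in_deg2_eq _ vv2 uu2 wu); rewrite ?u2s // eq_sym (one_common_out_neq F).
  by move: u1v1; rewrite (out_deg2_eq (x := v) _ vv1 vv2 u12 v12) ?eqxx // -wv.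
have : s \in O u.
  apply: (one_common_out_outlier (v := w) (u1 := u2) (u2 := u1)).
  by split; rewrite ?uu1 ?uu2 ?ws ?wu1 // eq_sym.
have [c u1c _] := out_other u1 u1.
have s_far i : walkn e i s c -> i < k -> False.
  move=> sc ik; move/eqP: su1; apply.
  by apply: (walkn_fork ws wu1 sc (_ : walkn e 1 u1 c)); rewrite ?walkn1 //; lia_k.
rewrite Ou !inE -orbA => /or3P[/eqP sv | /eqP sv1 | /eqP <- //]; exfalso.
- by apply: (s_far 2); [rewrite sv; apply: walkn_cons vv1 _; rewrite walkn1 u1_v1 | lia_k].
- by apply: (s_far 1); [rewrite sv1 walkn1 u1_v1 | lia_k].
Qed.

End Twin.

(* [a] is the third outlier of [u], and [w1], [w2] are the in-neighbours of [u1],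
   [v1] other than [u], [v]. *)
Section TwinConfig.
Variables u v u1 u2 v1 a w1 w2 : V.
Hypotheses (F : one_common_out u v u1 u2 v1) (twin : forall x, e u1 x = e v1 x).
Hypotheses (Ou : O u = [set v; v1; a]) (w1u1 : e w1 u1) (w1a : e w1 a).
Hypotheses (w2v1 : e w2 v1) (w2a : e w2 a) (w1u : w1 != u).

Let uu1 : e u u1. Proof. by case: F => /andP[]. Qed.
Let uu2 : e u u2. Proof. by case: F => /andP[]. Qed.
Let vv1 : e v v1. Proof. by case: F => _ /andP[]. Qed.
Let vv2 : e v u2. Proof. by case: F => _ /andP[]. Qed.
Let u12 : u1 != u2. Proof. by case: F. Qed.
Let v12 : v1 != u2. Proof. by case: F. Qed.
Let u1v1 : u1 != v1. Proof. by case: F. Qed.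

Let u1_v1 x : e u1 x -> e v1 x. Proof. by rewrite twin. Qed.

Let aO : a \in O u. Proof. by rewrite Ou !inE eqxx orbT. Qed.
Let u1a : u1 != a.
Proof. by apply: contraTneq aO => <-; rewrite (tree_outlierF uu1) ?tree_root. Qed.
Let u2a : u2 != a.
Proof. by apply: contraTneq aO => <-; rewrite (tree_outlierF uu2) ?tree_root. Qed.
Let v1a : v1 != a.
Proof.
apply/eqP => v1a; move: (card_outlier u); rewrite Ou v1a -setUA setUid cards2.
by case: (v != a).
Qed.

Lemma twin_outlier_w1 : O w1 = [set w2; v1; u2].
Proof.
have w2O : w2 \in O w1.
  apply/contraT; rewrite (notin_outlier _ w1u1 w1a u1a) => /or3P[/eqP w21 | w2t | w2t].
  - by move: u1v1; rewrite (out_deg2_eq w1u1 (_ : e w1 v1) w1a u1a v1a) ?eqxx -?w21.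
  - have w2u1 : w2 != u1 by apply: contraFneq (loopF v1) => w2u1; rewrite -twin -w2u1.
    by move: w2v1; rewrite (tree_edge_rootF (tree_twin u1_v1 w2t w2u1)).
  - by move: w2a; rewrite (tree_edge_rootF w2t).
have v1O : v1 \in O w1.
  apply: (one_common_out_outlier (v := w2) (u1 := u1) (u2 := a)).
  by split; rewrite ?w1u1 ?w1a ?w2v1 ?w2a.
have u2O : u2 \in O w1.
  apply: (one_common_out_outlier (v := u) (u1 := a) (u2 := u1)).
  by split; rewrite ?w1u1 ?w1a ?uu1 ?uu2 // eq_sym.
apply: outlier_eq3 => //; first by apply: contraFneq (loopF v1) => w2v1'; rewrite -{1}w2v1'.
apply/eqP => w2u2; have v_v1 : walkn e 2 v v1 by apply: walkn_cons vv2 _; rewrite walkn1 -w2u2.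
by move: v_v1; rewrite (walkn_edge vv1) //; lia_k.
Qed.

Lemma twin_tree_a : u \in tree a.
Proof.
have uw2 : u != w2.
  by apply: contra_neq u1v1 => uw2; apply: (out_deg2_eq uu1 _ uu2 u12 v12); rewrite uw2.
have uv1 : u != v1 by apply: contraTneq (one_common_out_outlier F) => <-; rewrite root_outlierF.
have uu2' : u != u2 by apply: contraFneq (loopF u) => uu2'; rewrite {2}uu2'.
have : u \notin O w1 by rewrite twin_outlier_w1 !inE !negb_or uw2 uv1 uu2'.
rewrite (notin_outlier _ w1u1 w1a u1a) => /or3P[/eqP uw1 | ut | //].
- by move: w1u; rewrite uw1 eqxx.
- by move: uu1; rewrite (tree_edge_rootF ut).
Qed.

Lemma twin_tree_u2_sub y : y \in tree u2 -> y != u2 -> y != w1 -> y != w2 -> y \in tree a.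
Proof.
move=> yt yu2 yw1 yw2.
have yv1 : y != v1 by apply: contraTneq yt => ->; rewrite (one_common_out_treeF F) ?tree_root.
have : y \notin O w1 by rewrite twin_outlier_w1 !inE !negb_or yw2 yv1 yu2.
rewrite (notin_outlier _ w1u1 w1a u1a) (negbTE yw1) /= => /orP[yt1 | //].
by move: u12; rewrite (tree_fork uu1 uu2 yt1 yt) eqxx.
Qed.

Lemma twin_escape_sub z : 0 < depth u2 z -> desc u2 z :\: tree a \subset [set w1; w2].
Proof.
move=> dz; apply/subsetP => y; rewrite in_setD mem_desc => /andP[ya /and3P[yt dzy _]].
have yu2 : y != u2 by rewrite -depth_eq0 -lt0n (leq_trans dz dzy).
apply: contraR ya; rewrite in_set2 negb_or => /andP[yw1 yw2].
exact: twin_tree_u2_sub.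
Qed.

Lemma twin_out_nbr_u2 g : e u2 g -> e a g.
Proof.
move=> u2g; have dg : depth u2 g = 1 by apply/eqP; rewrite depth_eq1.
have gt : g \in tree u2 by rewrite mem_tree dg; lia_k.
apply/contraT => ag; have ga : g != a.
  by apply: contraTneq aO => <-; rewrite (tree_outlierF uu2 gt).
have lag : depth u2 g < depth a g.
  by rewrite dg ltn_neqAle eq_sym depth_eq1 ag lt0n depth_eq0 ga.
have esc : desc u2 g :\: tree a \subset [set w1; w2] by apply: twin_escape_sub; rewrite dg.
have := leq_trans (escape_weight gt (fun=> lag)) (leq_sum_subset _ esc).
move/leq_trans/(_ (leq_sum_setU _ _ _)); rewrite !big_set1.
rewrite (weight_eq1 (depth_sibling_pred uu2 uu1 w1u1)).
rewrite (weight_eq1 (depth_sibling_pred vv2 vv1 w2v1)) /weight dg.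
have p4 : 2 ^ 2 <= 2 ^ (k.-1 - 1) by rewrite leq_exp2l //; lia_k.
by move/(leq_trans p4).
Qed.

Lemma twin_config_false : False.
Proof.
have [g1 u2g1 _] := out_other u2 u2; have [g2 u2g2 g21] := out_other u2 g1.
have a_u2 x : e a x -> e u2 x.
  move=> ax; case: (eqVneq x g2) => [-> // | xg2].
  by rewrite (out_deg2_eq ax (twin_out_nbr_u2 u2g1) (twin_out_nbr_u2 u2g2) xg2) // eq_sym.
have ua : u != a by apply: contraTneq aO => <-; rewrite root_outlierF.
by move: uu2; rewrite (tree_edge_rootF (tree_twin a_u2 twin_tree_a ua)).
Qed.

End TwinConfig.

Lemma twin_out_nbrsF u v u1 u2 v1 :
  one_common_out u v u1 u2 v1 -> (forall x, e u1 x = e v1 x) -> False.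
Proof.
move=> F twin; have [/andP[uu1 uu2] /andP[vv1 vv2] u12 v12 u1v1] := F.
have vv1' : v != v1 by apply: contraFneq (loopF v) => vv1'; rewrite {2}vv1'.
have [a [av av1 Ou]] := outlier_third (twin_root_outlier F twin) (one_common_out_outlier F) vv1'.
have aO : a \in O u by rewrite Ou !inE eqxx !orbT.
have [w1 w1u1 w1u] := in_other u1 u; have [w2 w2v1 w2v] := in_other v1 v.
have w1a := twin_in_nbr F twin w1u1 w1u aO av av1.
have au : a != u by apply: contraTneq aO => ->; rewrite root_outlierF.
have au1 : a != u1 by apply: contraTneq aO => ->; rewrite (tree_outlierF uu1) ?tree_root.
have w2a := twin_in_nbr (one_common_out_sym F) (fun x => esym (twin x)) w2v1 w2v
  (twin_third_outlier F twin aO av av1) au au1.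
exact: twin_config_false F twin Ou w1u1 w1a w2v1 w2a w1u.
Qed.

Section OutNbrs.
Variables u v u1 u2 v1 : V.
Hypothesis F : one_common_out u v u1 u2 v1.

Let uu1 : e u u1. Proof. by case: F => /andP[]. Qed.
Let uu2 : e u u2. Proof. by case: F => /andP[]. Qed.
Let vv1 : e v v1. Proof. by case: F => _ /andP[]. Qed.
Let vv2 : e v u2. Proof. by case: F => _ /andP[]. Qed.
Let u12 : u1 != u2. Proof. by case: F. Qed.
Let v1O : v1 \in O u. Proof. exact: one_common_out_outlier F. Qed.
Let u1O : u1 \in O v. Proof. exact: one_common_out_outlier (one_common_out_sym F). Qed.

Lemma sphere2_u1F : u1 \notin sphere e 2 v1.
Proof.
rewrite inE; apply: contraL u1O => /(walkn_cons vv1) vu1.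
by rewrite inE negbK; apply/dist_leP; exists 3 => //; lia_k.
Qed.

Lemma out_nbrs_not_outliers : ~~ (Nout e v1 \subset O u).
Proof.
apply/negP => sub; have Ou : O u = v1 |: Nout e v1.
  apply/esym/eqP; rewrite eqEcard subUset sub1set v1O sub card_outlier cardsU1 inE loopF.
  by case: (reg v1) => ->.
have v1v1 : ~~ walkn e 2 v1 v1 by rewrite walkn_cycle //; lia_k.
move: (subset_leq_card (sphere2_outlier F Ou v1v1)) (cardsD1 u1 (sphere e 2 v1)).
by rewrite card_outlier (negbTE sphere2_u1F) card_sphere //; lia_k.
Qed.

Lemma out_nbr_outlier_or_tree c : e v1 c -> (c \in O u) || (c \in tree u1).
Proof.
move=> v1c; case/boolP: (c \in O u) => //=.
rewrite (notin_outlier _ uu1 uu2 u12) => /or3P[/eqP cu | // | ct].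
- have : walkn e 3 v u2 by apply: walkn_cons vv1 (walkn_rcons _ uu2); rewrite walkn1 -cu.
  by rewrite (walkn_edge vv2) //; lia_k.
- have v1t : c \in tree v1 by apply: tree_edge v1c; rewrite depth0; lia_k.
  by rewrite (one_common_out_treeF F v1t) in ct.
Qed.

Lemma out_nbr_lag_weight c : e v1 c -> c \in tree u1 -> ~~ e u1 c ->
  2 ^ (k.-1 - 1) <= \sum_(y in desc v1 c :\: tree u1) weight v1 y.
Proof.
move=> v1c ct u1c; have dc : depth v1 c = 1 by apply/eqP; rewrite depth_eq1.
have cu1 : c != u1.
  apply: contraTneq u1O => <-; rewrite inE negbK; apply/dist_leP.
  by exists 2; [lia_k | apply: walkn_cons vv1 _; rewrite walkn1].
have ct' : c \in tree v1 by rewrite mem_tree dc; lia_k.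
have lag : c \in tree u1 -> depth v1 c < depth u1 c.
  by rewrite dc ltn_neqAle eq_sym depth_eq1 u1c lt0n depth_eq0 cu1.
by have := escape_weight ct' lag; rewrite /weight dc.
Qed.

Lemma lagging_out_nbrsF c1 c2 : c1 != c2 -> e v1 c1 -> e v1 c2 ->
  c1 \in tree u1 -> c2 \in tree u1 -> ~~ e u1 c1 -> ~~ e u1 c2 -> False.
Proof.
move=> c12 v1c1 v1c2 c1t c2t u1c1 u1c2.
have [p [q [pv1 qv1 _ Ou]]] := outlier_split v1O.
have far y : y \in O u -> y != v1 -> weight v1 y <= 2 ^ (k.-1 - 2).
  move=> yO yv1; have v1y : ~~ e v1 y.
    apply: contraTN yO => v1y; case: (eqVneq y c2) => [-> | yc2].
      by rewrite (tree_outlierF uu1 c2t).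
    by rewrite (out_deg2_eq v1y v1c1 v1c2 yc2 c12) (tree_outlierF uu1 c1t).
  rewrite /weight leq_exp2l //; apply: leq_sub2l.
  by rewrite ltn_neqAle eq_sym depth_eq1 v1y lt0n depth_eq0 yv1.
have esc c : e v1 c -> desc v1 c :\: tree u1 \subset [set u; p; q].
  move=> v1c; apply/subsetP => y; rewrite in_setD mem_desc => /andP[yu1 /and3P[yv1 dcy _]].
  have := subsetP (one_common_out_tree_sub F) y; rewrite in_setD yu1 yv1 => /(_ isT).
  rewrite in_setU1 Ou !inE -orbA => /or4P[-> | /eqP yv1' | -> | ->]; rewrite ?orbT //.
  by move: dcy; rewrite yv1' depth0 (eqP (_ : depth v1 c == 1)) ?depth_eq1.
have := leq_add (out_nbr_lag_weight v1c1 c1t u1c1) (out_nbr_lag_weight v1c2 c2t u1c2).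
rewrite -sum_setU_disjoint; last first.
  have [dc1 dc2] : depth v1 c1 = 1 /\ depth v1 c2 = 1 by split; apply/eqP; rewrite depth_eq1.
  apply: disjointWl (subsetDl _ _) (disjointWr (subsetDl _ _) (desc_disjoint _ _ _ c12)).
  - by rewrite mem_tree dc1; lia_k.
  - by rewrite mem_tree dc2; lia_k.
  - by rewrite dc1 dc2.
have escU : (desc v1 c1 :\: tree u1) :|: (desc v1 c2 :\: tree u1) \subset [set u; p; q].
  by rewrite subUset !esc.
move/leq_trans/(_ (leq_sum_subset _ escU))/leq_trans/(_ (leq_sum_set3 _ _ _ _)).
rewrite (weight_eq1 (depth_sibling_pred vv1 vv2 uu2)).
have pO : p \in O u by rewrite Ou !inE eqxx !orbT.
have qO : q \in O u by rewrite Ou !inE eqxx !orbT.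
have x_gt0 : 0 < 2 ^ (k.-1 - 2) by rewrite expn_gt0.
have -> : k.-1 - 1 = (k.-1 - 2).+1 by lia_k.
by rewrite expnS; move: (far p pO pv1) (far q qO qv1) x_gt0; lia_k.
Qed.

Lemma shared_out_nbrF c c' : c != c' -> e v1 c -> e v1 c' -> e u1 c' -> ~~ e u1 c ->
  c \in tree u1 -> False.
Proof.
move=> cc' v1c v1c' u1c' u1c ct; have [q u1q qc'] := out_other u1 c'.
have qc : q != c by apply: contraNneq u1c => <-.
suff : c \in O u1 by rewrite (outlier_treeF ct).
apply: (one_common_out_outlier (v := v1) (u1 := q) (u2 := c')).
by split; rewrite ?u1q ?u1c' ?v1c ?v1c'.
Qed.

Lemma one_common_out_card : #|O u :&: Nout e v1| = 1.
Proof.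
have [c1 v1c1 _] := out_other v1 v1; have [c2 v1c2 c21] := out_other v1 c1.
have c12 : c1 != c2 by rewrite eq_sym.
have Nv1 := Nout_pair v1c1 v1c2 c12.
case/boolP: (c1 \in O u) => c1O; case/boolP: (c2 \in O u) => c2O.
- by case/negP: out_nbrs_not_outliers; rewrite Nv1 subUset !sub1set c1O c2O.
- by rewrite Nv1 cardsI2.
- by rewrite Nv1 setUC cardsI2.
have c1t : c1 \in tree u1 by move: (out_nbr_outlier_or_tree v1c1); rewrite (negbTE c1O).
have c2t : c2 \in tree u1 by move: (out_nbr_outlier_or_tree v1c2); rewrite (negbTE c2O).
exfalso; case/boolP: (e u1 c1) => u1c1; case/boolP: (e u1 c2) => u1c2.
- apply: (twin_out_nbrsF F) => x.
  by move: (Nout_pair u1c1 u1c2 c12); rewrite -Nv1 => /setP/(_ x); rewrite !inE.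
- exact: shared_out_nbrF c21 v1c2 v1c1 u1c1 u1c2 c2t.
- exact: shared_out_nbrF c12 v1c1 v1c2 u1c2 u1c1 c1t.
- exact: lagging_out_nbrsF c12 v1c1 v1c2 c1t c2t u1c1 u1c2.
Qed.

End OutNbrs.

End Outliers.

Theorem corollary4 (V : finType) (e : rel V) (k : nat) (u v u1 u2 v1 : V) :
  4 <= k ->
  digraph_2k3 e k ->
  u != v ->
  Nout e u :&: Nout e v = [set u2] ->
  Nout e u = [set u1; u2] ->
  Nout e v = [set v1; u2] ->
  [/\ v1 \in outlier e k u, u1 \in outlier e k v,
      #|outlier e k u :&: Nout e v1| = 1 &
      #|outlier e k v :&: Nout e u1| = 1].
Proof.
(* [u != v] follows from the other hypotheses, see [one_common_out_neq]. *)
move=> k_ge4 [geo reg order] _ Nuv Nu Nv.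
have [[Nu2 _] [Nv2 _]] := (reg u, reg v).
have u12 : u1 != u2 by move: Nu2; rewrite Nu cards2; case: (u1 != u2).
have v12 : v1 != u2 by move: Nv2; rewrite Nv cards2; case: (v1 != u2).
have u1v1 : u1 != v1.
  by apply: contra_neq u12 => u1v1; apply/set1P; rewrite -Nuv Nu Nv u1v1 !inE eqxx.
have eu y : e u y = (y \in [set u1; u2]) by rewrite -Nu inE.
have ev y : e v y = (y \in [set v1; u2]) by rewrite -Nv inE.
have F : one_common_out e u v u1 u2 v1 by split; rewrite // ?eu ?ev !inE !eqxx ?orbT.
have F' := one_common_out_sym F.
split; [exact: (one_common_out_outlier geo reg order k_ge4 F)
       | exact: (one_common_out_outlier geo reg order k_ge4 F')
       | exact: (one_common_out_card geo reg order k_ge4 F)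
       | exact: (one_common_out_card geo reg order k_ge4 F')].
Qed.
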